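(* Assume that the mask $\mathbf{M} \in \mathbb{R}^{L \times L}$ supports matrix-vector multiplication (computing $\mathbf{M}\mathbf{x}$ for $\mathbf{x}\in\mathbb{R}^L$) in time $T_{\mathbf{M}}(L)$. Then the general masked kernel attention with mask $\mathbf{M}$, where the kernel is computed through the feature map $\phi:\mathbb{R}^{d_{QK}}\rightarrow\mathbb{R}^{m}$, can be implemented in time $O((T_{\mathbf{M}}(L)+L)md)$.
   Context: Let $L$ be the number of input tokens, with query and key matrices $\mathbf{Q},\mathbf{K}\in\mathbb{R}^{L\times d_{QK}}$ and value matrix $\mathbf{V}\in\mathbb{R}^{L\times d}$. The general masked kernel attention with mask $\mathbf{M}\in\mathbb{R}^{L\times L}$ is $\mathrm{Att}_{\mathrm{K}}(\mathbf{Q},\mathbf{K},\mathbf{V},\mathbf{M})=\mathbf{D}^{-1}\mathbf{A}\mathbf{V}$, where $\mathbf{A}=\mathbf{M}\odot\mathcal{K}(\mathbf{Q},\mathbf{K})$, $\mathbf{D}=\mathrm{diag}(\mathbf{A}\mathbf{1}_L)$, $\odot$ is the element-wise (Hadamard) product, $\mathbf{1}_L$ is the all-ones vector of length $L$, and $\mathcal{K}(\mathbf{Q},\mathbf{K})_{i,j}=\mathrm{K}(\mathbf{q}_i^{\top},\mathbf{k}_j^{\top})$ for the $i$th row $\mathbf{q}_i$ of $\mathbf{Q}$ and $j$th row $\mathbf{k}_j$ of $\mathbf{K}$. The kernel is assumed to be low-rank (linearizable) via a feature map $\phi:\mathbb{R}^{d_{QK}}\rightarrow\mathbb{R}^{m}$,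 i.e. $\mathrm{K}(\mathbf{x},\mathbf{y})=\phi(\mathbf{x})^{\top}\phi(\mathbf{y})$ (possibly only in expectation for a random feature map), so that the $i$th output is $\mathbf{r}_i=\frac{\phi(\mathbf{q}_i^{\top})^{\top}\sum_{j}\mathbf{M}_{i,j}\phi(\mathbf{k}_j^{\top})\mathbf{v}_j}{\phi(\mathbf{q}_i^{\top})^{\top}\sum_{j}\mathbf{M}_{i,j}\phi(\mathbf{k}_j^{\top})}$, with $\mathbf{v}_j$ the $j$th row of $\mathbf{V}$. *)

From HB Require Import structures.
From mathcomp Require Import all_boot all_order all_algebra.
From mathcomp Require Import reals.
Set Implicit Arguments. Unset Strict Implicit. Unset Printing Implicit Defensive.
Import Order.TTheory GRing.Theory Num.Theory.
Local Open Scope ring_scope.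

Section Attention.
Variables (R : realType) (L dQK m d : nat).

Definition kernel_mx (phi : 'rV[R]_dQK -> 'rV[R]_m) (Q Kk : 'M[R]_(L, dQK))
  : 'M[R]_L :=
  \matrix_(i, j) (phi (row i Q) *m (phi (row j Kk))^T) 0 0.

Definition att_A (M : 'M[R]_L) phi Q Kk : 'M[R]_L :=
  \matrix_(i, j) (M i j * kernel_mx phi Q Kk i j).

(* D^{-1} with D = diag(A 1_L); the diagonal entries are inverted
   entrywise (MathComp convention 0^-1 = 0). *)
Definition att_Dinv (M : 'M[R]_L) phi Q Kk : 'M[R]_L :=
  diag_mx (\row_i (\sum_j att_A M phi Q Kk i j)^-1).

Definition kernel_att (M : 'M[R]_L) phi Q Kk (V : 'M[R]_(L, d)) : 'M[R]_(L, d) :=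
  att_Dinv M phi Q Kk *m att_A M phi Q Kk *m V.

Definition feat (phi : 'rV[R]_dQK -> 'rV[R]_m) (X : 'M[R]_(L, dQK)) : 'M[R]_(L, m) :=
  \matrix_(i, k) phi (row i X) 0 k.
End Attention.

(* Cost model: straight-line programs over a real register file         *)
(* (nat -> R).  Each scalar arithmetic operation costs 1; a call to the *)
(* mask oracle (x |-> M x, x in R^L) costs T L.                         *)
Inductive instr (R : Type) : Type :=
  | IConst of R & nat
  | IAdd of nat & nat & nat
  | ISub of nat & nat & nat
  | IMul of nat & nat & nat
  | IDiv of nat & nat & nat
  | IMatVec of (nat -> nat) & (nat -> nat).

Section Machine.
Variables (R : realType) (L : nat).

Definition upd (s : nat -> R) (r : nat) (v : R) : nat -> R :=
  fun x => if x == r then v else s x.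

Definition mget p q (A : 'M[R]_(p, q)) (i j : nat) : R :=
  match @insub nat (fun k => k < p)%N _ i, @insub nat (fun k => k < q)%N _ j with
  | Some i', Some j' => A i' j'
  | _, _ => 0
  end.

Definition exec_instr (M : 'M[R]_L) (s : nat -> R) (ins : instr R) : nat -> R :=
  match ins with
  | IConst c r => upd s r c
  | IAdd a b r => upd s r (s a + s b)
  | ISub a b r => upd s r (s a - s b)
  | IMul a b r => upd s r (s a * s b)
  | IDiv a b r => upd s r (s a / s b)
  | IMatVec src dst =>
      let x : 'cV[R]_L := \col_k s (src (nat_of_ord k)) in
      let y : 'cV[R]_L := M *m x in
      foldl (fun s' (k : 'I_L) => upd s' (dst (nat_of_ord k)) (y k 0)) s (enum 'I_L)
  end.

Definition run (M : 'M[R]_L) (P : seq (instr R)) (s : nat -> R) : nat -> R :=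
  foldl (exec_instr M) s P.

Definition instr_cost (T : nat -> nat) (ins : instr R) : nat :=
  match ins with
  | IMatVec _ _ => T L
  | _ => 1%N
  end.

Definition prog_cost (T : nat -> nat) (P : seq (instr R)) : nat :=
  (\sum_(ins <- P) instr_cost T ins)%N.

(* Input layout: registers [0, Lm) hold phi(Q) row-major, [Lm, 2Lm)
   hold phi(K) row-major, [2Lm, 2Lm + Ld) hold V row-major, all other
   registers are 0. *)
Definition encode m d (FQ FK : 'M[R]_(L, m)) (V : 'M[R]_(L, d)) : nat -> R :=
  fun r =>
    if (r < L * m)%N then mget FQ (r %/ m) (r %% m)
    else if (r < 2 * L * m)%N then mget FK ((r - L * m) %/ m) ((r - L * m) %% m)
    else if (r < 2 * L * m + L * d)%N then
      mget V ((r - 2 * L * m) %/ d) ((r - 2 * L * m) %% d)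
    else 0.
End Machine.

From mathcomp Require Import all_boot all_order all_algebra.
From mathcomp Require Import reals.
From mathcomp Require Import zify ring.

(* Since K(q, k) = phi(q) . phi(k), the masked product A w is
   sum_k phi(Q)_{.k} .* (M (phi(K)_{.k} .* w)): m calls to the mask oracle plus
   O(L m) scalar work.  Doing this for the d columns of V and for the all-ones
   column, which yields the normaliser A 1_L, and finishing with L d divisions
   computes D^-1 A V at cost (d + 1) m (T(L) + 3 L) + L d <= 7 (T(L) + L) m d. *)

Set Implicit Arguments. Unset Strict Implicit. Unset Printing Implicit Defensive.
Import GRing.Theory.
Local Open Scope ring_scope.

Section LinearAttention.
Variables (R : realType) (L dQK m d : nat).
Variables (M : 'M[R]_L) (phi : 'rV[R]_dQK -> 'rV[R]_m) (Q Kk : 'M[R]_(L, dQK)).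

Definition linear_masked_sum (FQ FK : 'M[R]_(L, m)) (w : 'I_L -> R) (i : 'I_L) : R :=
  \sum_(k < m) FQ i k * \sum_(l < L) M i l * (FK l k * w l).

Lemma kernel_mx_feat i l :
  kernel_mx phi Q Kk i l = \sum_(k < m) feat phi Q i k * feat phi Kk l k.
Proof. by rewrite !mxE; apply: eq_bigr => k _; rewrite !mxE. Qed.

Lemma linear_masked_sum_feat w i :
  linear_masked_sum (feat phi Q) (feat phi Kk) w i
  = \sum_(l < L) att_A M phi Q Kk i l * w l.
Proof.
rewrite /linear_masked_sum; under eq_bigr do rewrite big_distrr.
rewrite exchange_big; apply: eq_bigr => l _ /=.
rewrite mxE kernel_mx_feat big_distrr big_distrl; apply: eq_bigr => k _ /=; ring.
Qed.

Lemma kernel_attE (V : 'M[R]_(L, d)) i j :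
  kernel_att M phi Q Kk V i j
  = (\sum_(l < L) att_A M phi Q Kk i l * V l j) / \sum_(l < L) att_A M phi Q Kk i l.
Proof. by rewrite /kernel_att /att_Dinv -mulmxA mul_diag_mx !mxE mulrC. Qed.

End LinearAttention.

Fixpoint loop (R : Type) (f : nat -> seq (instr R)) (N : nat) : seq (instr R) :=
  if N is N'.+1 then loop f N' ++ f N' else [::].

Section Machine.
Variables (R : realType) (L : nat).

Lemma upd_eq (s : nat -> R) r v : upd s r v r = v.
Proof. by rewrite /upd eqxx. Qed.

Lemma upd_neq (s : nat -> R) r r' v : r' != r -> upd s r v r' = s r'.
Proof. by rewrite /upd => /negbTE->. Qed.

Lemma prog_cost_cat T (P1 P2 : seq (instr R)) :
  prog_cost L T (P1 ++ P2) = (prog_cost L T P1 + prog_cost L T P2)%N.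
Proof. by rewrite /prog_cost big_cat. Qed.

Lemma prog_cost_loop T (f : nat -> seq (instr R)) N c :
  (forall n, prog_cost L T (f n) = c) -> prog_cost L T (loop f N) = (N * c)%N.
Proof.
move=> fc; elim: N => [|N IH] /=; first by rewrite /prog_cost big_nil.
by rewrite prog_cost_cat IH fc mulSn addnC.
Qed.

Variable M : 'M[R]_L.

Lemma run_cat P1 P2 s : run M (P1 ++ P2) s = run M P2 (run M P1 s).
Proof. by rewrite /run foldl_cat. Qed.

Lemma run_cons ins P s : run M (ins :: P) s = run M P (exec_instr M s ins).
Proof. by []. Qed.

Lemma run_seq1 ins s : run M [:: ins] s = exec_instr M s ins.
Proof. by []. Qed.

Lemma run_loop_ind (P : nat -> (nat -> R) -> Prop) f N s :
  P 0%N s ->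
  (forall n s', (n < N)%N -> P n s' -> P n.+1 (run M (f n) s')) ->
  P N (run M (loop f N) s).
Proof.
move=> P0 step; suff: forall n, (n <= N)%N -> P n (run M (loop f n) s) by apply.
by elim=> [|n IH] lenN //=; rewrite run_cat; apply: step => //; apply/IH/ltnW.
Qed.

Section Updates.
Variables (g : 'I_L -> nat) (f : 'I_L -> R).

Lemma foldl_upd_notin (ks : seq 'I_L) s r :
  all (fun k => g k != r) ks -> foldl (fun s' k => upd s' (g k) (f k)) s ks r = s r.
Proof.
elim: ks s => [|k ks IH] s //= /andP[gkr ks_r].
by rewrite IH // upd_neq // eq_sym.
Qed.

Lemma foldl_upd_in (ks : seq 'I_L) s i : injective g -> i \in ks ->
  foldl (fun s' k => upd s' (g k) (f k)) s ks (g i) = f i.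
Proof.
move=> g_inj; elim: ks s => [|k ks IH] s //=; rewrite inE.
have [i_ks _|i_ks] := boolP (i \in ks); first exact: IH.
rewrite orbF => /eqP ik; rewrite ik in i_ks *; rewrite foldl_upd_notin ?upd_eq //.
apply/allP => k' k'_ks; apply/eqP => /g_inj ek'.
by rewrite -ek' k'_ks in i_ks.
Qed.

End Updates.

Lemma exec_matvec_notin (src dst : nat -> nat) s r : (forall k : 'I_L, dst k != r) ->
  exec_instr M s (IMatVec R src dst) r = s r.
Proof. by move=> dst_r; apply: foldl_upd_notin; apply/allP => k _. Qed.

Lemma exec_matvec_in (src dst : nat -> nat) s (i : 'I_L) : injective (fun k : 'I_L => dst k) ->
  exec_instr M s (IMatVec R src dst) (dst i) = \sum_(l < L) M i l * s (src l).
Proof.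
move=> dst_inj; rewrite /= foldl_upd_in ?mem_enum // mxE.
by apply: eq_bigr => l _; rewrite mxE.
Qed.

End Machine.

Lemma flat_index_lt i j n N : (i < N)%N -> (j < n)%N -> (i * n + j < N * n)%N.
Proof. by move=> iN jn; nia. Qed.

Lemma flat_index_div i j n : (j < n)%N -> ((i * n + j) %/ n)%N = i.
Proof. by move=> jn; rewrite divnMDl ?divn_small ?addn0 //; lia. Qed.

Lemma flat_index_mod i j n : (j < n)%N -> ((i * n + j) %% n)%N = j.
Proof. by move=> jn; rewrite modnMDl modn_small. Qed.

Lemma mgetE (R : realType) p q (A : 'M[R]_(p, q)) (i : 'I_p) (j : 'I_q) :
  mget A i j = A i j.
Proof.
rewrite /mget (insubT (fun k => k < p)%N (ltn_ord i)).
by rewrite (insubT (fun k => k < q)%N (ltn_ord j)); congr (A _ _); apply: val_inj.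
Qed.

Section Layout.
Variables (L m d : nat).

Definition fq_reg i k := (i * m + k)%N.
Definition fk_reg l k := (L * m + (l * m + k))%N.
Definition v_reg l j := (2 * L * m + (l * d + j))%N.
Definition zero_reg := (2 * L * m + L * d)%N.
Definition x_reg l := (zero_reg.+1 + l)%N.
Definition y_reg l := (zero_reg.+1 + L + l)%N.
Definition tmp_reg := (zero_reg.+1 + 2 * L)%N.
Definition acc_reg i j := (tmp_reg.+1 + (i * d.+1 + j))%N.
Definition out_reg n := (tmp_reg.+1 + L * d.+1 + n)%N.

Lemma fq_reg_lt i k : (i < L)%N -> (k < m)%N -> (fq_reg i k < zero_reg)%N.
Proof. by move=> iL km; have := flat_index_lt iL km; rewrite /fq_reg /zero_reg; lia. Qed.

Lemma fk_reg_lt l k : (l < L)%N -> (k < m)%N -> (fk_reg l k < zero_reg)%N.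
Proof. by move=> lL km; have := flat_index_lt lL km; rewrite /fk_reg /zero_reg; lia. Qed.

Lemma v_reg_lt l j : (l < L)%N -> (j < d)%N -> (v_reg l j < zero_reg)%N.
Proof. by move=> lL jd; have := flat_index_lt lL jd; rewrite /v_reg /zero_reg; lia. Qed.

Lemma acc_reg_lt i j : (i < L)%N -> (j <= d)%N -> (acc_reg i j < out_reg 0)%N.
Proof.
by move=> iL jd; have := @flat_index_lt i j d.+1 L iL jd; rewrite /acc_reg /out_reg; lia.
Qed.

Lemma eq_acc_reg i j i' j' : (j <= d)%N -> (j' <= d)%N ->
  (acc_reg i j == acc_reg i' j') = (i == i') && (j == j').
Proof.
move=> jd j'd; apply/eqP/andP => [|[/eqP-> /eqP->]] // /eqP.
rewrite /acc_reg eqn_add2l => /eqP e.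
have := congr1 (divn^~ d.+1) e; have := congr1 (modn^~ d.+1) e.
by rewrite /= !flat_index_mod ?flat_index_div // => -> ->.
Qed.

Section Encoding.
Variables (R : realType) (FQ FK : 'M[R]_(L, m)) (V : 'M[R]_(L, d)).

Lemma encode_fq (i : 'I_L) (k : 'I_m) : encode FQ FK V (fq_reg i k) = FQ i k.
Proof.
have := flat_index_lt (ltn_ord i) (ltn_ord k); rewrite /encode /fq_reg => ->.
by rewrite flat_index_div // flat_index_mod // mgetE.
Qed.

Lemma encode_fk (l : 'I_L) (k : 'I_m) : encode FQ FK V (fk_reg l k) = FK l k.
Proof.
have := flat_index_lt (ltn_ord l) (ltn_ord k); rewrite /encode /fk_reg => lt_lk.
rewrite ifF; last by apply/negbTE; lia.
rewrite ifT; last by lia.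
by rewrite addKn flat_index_div // flat_index_mod // mgetE.
Qed.

Lemma encode_v (l : 'I_L) (j : 'I_d) : encode FQ FK V (v_reg l j) = V l j.
Proof.
have := flat_index_lt (ltn_ord l) (ltn_ord j); rewrite /encode /v_reg => lt_lj.
rewrite ifF; last by apply/negbTE; lia.
rewrite ifF; last by apply/negbTE; lia.
rewrite ifT; last by lia.
by rewrite addKn flat_index_div // flat_index_mod // mgetE.
Qed.

Lemma encode_work r : (zero_reg <= r)%N -> encode FQ FK V r = 0.
Proof.
rewrite /zero_reg /encode => le_r.
by rewrite !ifF //; apply/negbTE; lia.
Qed.

End Encoding.

Section Program.
Variable R : realType.

(* Column [d] is the all-ones column, whose pass accumulates the normaliser in
   [acc_reg i d].  Its entries are copied by adding [zero_reg], which is 0 in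
   every encoded input: an [IConst 1] would cost 1 even when [L = T L = 0]. *)
Definition load_instr k j l : instr R :=
  if (j < d)%N then IMul R (fk_reg l k) (v_reg l j) (x_reg l)
  else IAdd R (fk_reg l k) zero_reg (x_reg l).

Definition accum_instrs k j i : seq (instr R) :=
  [:: IMul R (fq_reg i k) (y_reg i) tmp_reg; IAdd R (acc_reg i j) tmp_reg (acc_reg i j)].

Definition feature_pass k j : seq (instr R) :=
  loop (fun l => [:: load_instr k j l]) L ++
  IMatVec R x_reg y_reg :: loop (accum_instrs k j) L.

Definition column_pass j : seq (instr R) := loop (fun k => feature_pass k j) m.

Definition normalize_instrs n : seq (instr R) :=
  [:: IDiv R (acc_reg (n %/ d) (n %% d)) (acc_reg (n %/ d) d) (out_reg n)].

Definition att_prog : seq (instr R) :=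
  loop column_pass d.+1 ++ loop normalize_instrs (L * d).

Lemma att_prog_cost T :
  prog_cost L T att_prog = (d.+1 * (m * (T L + 3 * L)) + L * d)%N.
Proof.
have pass_cost k j : prog_cost L T (feature_pass k j) = (T L + 3 * L)%N.
  rewrite prog_cost_cat /prog_cost big_cons -!/(prog_cost L T _).
  rewrite (prog_cost_loop _ _ (c := 1%N)); last first.
    by move=> l; rewrite /prog_cost big_seq1 /load_instr; case: ifP.
  rewrite (prog_cost_loop _ _ (c := 2%N)); last by move=> i; rewrite /prog_cost !big_cons big_nil.
  by rewrite /=; lia.
rewrite prog_cost_cat (prog_cost_loop _ _ (c := m * (T L + 3 * L))%N); last first.
  by move=> j; apply: prog_cost_loop => k; apply: pass_cost.
by rewrite (prog_cost_loop _ _ (c := 1%N)) ?muln1 // => n; rewrite /prog_cost big_seq1.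
Qed.

Variable M : 'M[R]_L.

Definition load_val (s : nat -> R) k j l :=
  if (j < d)%N then s (fk_reg l k) * s (v_reg l j) else s (fk_reg l k) + s zero_reg.

Lemma load_val_ext s s' k j l : (k < m)%N -> (l < L)%N ->
  (forall r, (r < x_reg 0)%N -> s' r = s r) -> load_val s' k j l = load_val s k j l.
Proof.
move=> km lL s's; have fk_lt := fk_reg_lt lL km.
rewrite /load_val; case: ifP => jd; rewrite !s's // /x_reg; try lia.
by have := v_reg_lt lL jd; lia.
Qed.

Lemma run_load k j s : (k < m)%N ->
  let s' := run M (loop (fun l => [:: load_instr k j l]) L) s in
  (forall r, (r < x_reg 0 \/ x_reg L <= r)%N -> s' r = s r) /\
  (forall l : 'I_L, s' (x_reg l) = load_val s k j l).
Proof.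
move=> km; set P := fun n (s' : nat -> R) =>
  (forall r, (r < x_reg 0 \/ x_reg n <= r)%N -> s' r = s r) /\
  (forall l, (l < n)%N -> s' (x_reg l) = load_val s k j l).
suff [frame loaded] : P L (run M (loop (fun l => [:: load_instr k j l]) L) s).
  by split=> // l; apply: loaded.
apply: run_loop_ind => [|n s' nL [frame loaded]]; first by split=> // r; case; lia.
have exec_load : exec_instr M s' (load_instr k j n) = upd s' (x_reg n) (load_val s' k j n).
  by rewrite /load_instr /load_val; case: ifP.
rewrite run_seq1 exec_load; split=> [r r_out | l ln].
  by rewrite upd_neq ?frame //; move: r_out; rewrite /x_reg; lia.
have [->|nl] := eqVneq l n.
  by rewrite upd_eq; apply: load_val_ext => // r r_lt; apply: frame; left.
by rewrite upd_neq ?loaded ?eqn_add2l //; lia.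
Qed.

Lemma exec_matvec_y s :
  let s' := exec_instr M s (IMatVec R x_reg y_reg) in
  (forall r, (r < y_reg 0 \/ y_reg L <= r)%N -> s' r = s r) /\
  (forall i : 'I_L, s' (y_reg i) = \sum_(l < L) M i l * s (x_reg l)).
Proof.
split=> [r r_out | i].
  by apply: exec_matvec_notin => l; move: r_out (ltn_ord l); rewrite /y_reg; lia.
by apply: exec_matvec_in => l l' /eqP; rewrite eqn_add2l => /eqP/val_inj.
Qed.

Lemma run_accum_instrs k j i s :
  run M (accum_instrs k j i) s =
  let p := s (fq_reg i k) * s (y_reg i) in
  upd (upd s tmp_reg p) (acc_reg i j) (s (acc_reg i j) + p).
Proof. by rewrite /= upd_eq upd_neq // /acc_reg; lia. Qed.

Lemma run_accum_loop k j s : (k < m)%N ->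
  let s' := run M (loop (accum_instrs k j) L) s in
  (forall r, (r < tmp_reg)%N -> s' r = s r) /\
  (forall (i : 'I_L) j', (j <= d)%N -> (j' <= d)%N -> s' (acc_reg i j') =
     s (acc_reg i j') + (if j' == j then s (fq_reg i k) * s (y_reg i) else 0)).
Proof.
move=> km; set P := fun n (s' : nat -> R) =>
  (forall r, (r < tmp_reg)%N -> s' r = s r) /\
  (forall (i : 'I_L) j', (j <= d)%N -> (j' <= d)%N -> s' (acc_reg i j') =
     s (acc_reg i j') + (if (j' == j) && (i < n)%N then s (fq_reg i k) * s (y_reg i) else 0)).
suff [frame acc] : P L (run M (loop (accum_instrs k j) L) s).
  by split=> // i j' jd j'd; rewrite acc // ltn_ord andbT.
apply: run_loop_ind => [|n s' nL [frame acc]].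
  by split=> // i j' _ _; rewrite andbF addr0.
rewrite run_accum_instrs /=; split=> [r r_lt | i j' jd j'd].
  by rewrite !upd_neq ?frame //; move: r_lt; rewrite /acc_reg; lia.
have [fq_lt y_lt] : (fq_reg n k < tmp_reg)%N /\ (y_reg n < tmp_reg)%N.
  by have := fq_reg_lt nL km; rewrite /tmp_reg /x_reg /y_reg; lia.
have [|] := boolP (acc_reg i j' == acc_reg n j).
  rewrite eq_acc_reg // => /andP[/eqP ein /eqP->].
  have := acc i j jd jd; rewrite ein eqxx ltnn addr0 upd_eq => ->.
  by rewrite ltnSn !frame.
move=> ne; rewrite !upd_neq ?acc //; last by rewrite /acc_reg; lia.
suff -> : (j' == j) && (i < n.+1)%N = (j' == j) && (i < n)%N by [].
move: ne; rewrite eq_acc_reg // ltnS leq_eqVlt.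
by case: (j' == j); rewrite /= ?andbT // => /negPf->.
Qed.

Definition pass_term (s : nat -> R) k j (i : 'I_L) :=
  s (fq_reg i k) * \sum_(l < L) M i l * load_val s k j l.

Lemma pass_term_ext s s' k j i : (k < m)%N ->
  (forall r, (r < x_reg 0)%N -> s' r = s r) -> pass_term s' k j i = pass_term s k j i.
Proof.
move=> km s's; rewrite /pass_term s's; last first.
  by have := fq_reg_lt (ltn_ord i) km; rewrite /x_reg; lia.
by congr (_ * _); apply: eq_bigr => l _; rewrite (load_val_ext j km (ltn_ord l) s's).
Qed.

Lemma run_feature_pass k j s : (k < m)%N -> (j <= d)%N ->
  let s' := run M (feature_pass k j) s in
  (forall r, (r < x_reg 0)%N -> s' r = s r) /\
  (forall (i : 'I_L) j', (j' <= d)%N ->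
     s' (acc_reg i j') = s (acc_reg i j') + (if j' == j then pass_term s k j i else 0)).
Proof.
move=> km jd; rewrite /feature_pass run_cat run_cons.
have [load_frame loaded] := run_load j s km.
set s1 := run M (loop _ L) s in load_frame loaded *.
have [mv_frame mv_y] := exec_matvec_y s1.
set s2 := exec_instr M s1 _ in mv_frame mv_y *.
have [acc_frame acc] := run_accum_loop j s2 km.
split=> [r r_lt | i j' j'd].
  rewrite acc_frame; last by move: r_lt; rewrite /x_reg /tmp_reg; lia.
  by rewrite mv_frame ?load_frame //; left; move: r_lt; rewrite /x_reg /y_reg; lia.
rewrite acc // mv_frame ?load_frame; try by right; rewrite /acc_reg /tmp_reg /x_reg /y_reg; lia.
have fq_lt := fq_reg_lt (ltn_ord i) km.
case: eqP => // _; rewrite /pass_term mv_y mv_frame ?load_frame;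
  try by left; rewrite /x_reg /y_reg; lia.
by congr (_ + _ * _); apply: eq_bigr => l _; rewrite loaded.
Qed.

Lemma run_column_pass j s : (j <= d)%N ->
  let s' := run M (column_pass j) s in
  (forall r, (r < x_reg 0)%N -> s' r = s r) /\
  (forall (i : 'I_L) j', (j' <= d)%N -> s' (acc_reg i j') =
     s (acc_reg i j') + (if j' == j then \sum_(k < m) pass_term s k j i else 0)).
Proof.
move=> jd; set P := fun n (s' : nat -> R) =>
  (forall r, (r < x_reg 0)%N -> s' r = s r) /\
  (forall (i : 'I_L) j', (j' <= d)%N -> s' (acc_reg i j') =
     s (acc_reg i j') + (if j' == j then \sum_(k < n) pass_term s k j i else 0)).
apply: (run_loop_ind (P := P)) => [|n s' nm [frame acc]].
  by split=> // i j' _; rewrite big_ord0 if_same addr0.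
have [pass_frame pass_acc] := run_feature_pass s' nm jd.
split=> [r r_lt | i j' j'd]; first by rewrite pass_frame ?frame.
rewrite pass_acc // acc // (pass_term_ext j i nm frame) big_ord_recr /=.
by case: eqP; rewrite ?addr0 ?addrA.
Qed.

Lemma run_columns s (i : 'I_L) j : (j <= d)%N ->
  run M (loop column_pass d.+1) s (acc_reg i j) =
  s (acc_reg i j) + \sum_(k < m) pass_term s k j i.
Proof.
move=> jd; set P := fun n (s' : nat -> R) =>
  (forall r, (r < x_reg 0)%N -> s' r = s r) /\
  (forall (i : 'I_L) j, (j <= d)%N -> s' (acc_reg i j) =
     s (acc_reg i j) + (if (j < n)%N then \sum_(k < m) pass_term s k j i else 0)).
suff [_ acc] : P d.+1 (run M (loop column_pass d.+1) s) by rewrite acc // ltnS jd.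
apply: run_loop_ind => [|n s' nd [frame acc]]; first by split=> // i' j' _; rewrite addr0.
have [col_frame col_acc] := run_column_pass s' nd.
split=> [r r_lt | i' j' j'd]; first by rewrite col_frame ?frame.
rewrite col_acc // acc //; case: (ltngtP j' n) => [lt|gt|->].
- by rewrite ltnS ltnW // addr0.
- by rewrite ltnS leqNgt gt !addr0.
rewrite ltnSn addr0; congr (_ + _).
by apply: eq_bigr => k _; exact: pass_term_ext.
Qed.

Lemma run_normalize s n : (n < L * d)%N ->
  run M (loop normalize_instrs (L * d)) s (out_reg n) =
  s (acc_reg (n %/ d) (n %% d)) / s (acc_reg (n %/ d) d).
Proof.
move=> nLd; have d_gt0 : (0 < d)%N by move: nLd; case: (d); rewrite ?muln0.
set P := fun N (s' : nat -> R) =>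
  (forall r, (r < out_reg 0)%N -> s' r = s r) /\
  (forall n', (n' < N)%N -> s' (out_reg n') =
     s (acc_reg (n' %/ d) (n' %% d)) / s (acc_reg (n' %/ d) d)).
suff [_ out] : P (L * d)%N (run M (loop normalize_instrs (L * d)) s) by exact: out.
apply: run_loop_ind => [|n' s' n'Ld [frame out]]; first by split=> // n'; lia.
have [iL jd] : (n' %/ d < L)%N /\ (n' %% d < d)%N by rewrite ltn_divLR // ltn_pmod.
rewrite run_seq1 /=; split=> [r r_lt | n'' n''_lt].
  by rewrite upd_neq ?frame //; move: r_lt; rewrite /out_reg; lia.
have [->|ne] := eqVneq n'' n'; first by rewrite upd_eq !frame ?acc_reg_lt // ltnW.
by rewrite upd_neq ?out //; rewrite /out_reg; lia.
Qed.

Lemma run_att_prog (FQ FK : 'M[R]_(L, m)) (V : 'M[R]_(L, d)) (i : 'I_L) (j : 'I_d) :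
  run M att_prog (encode FQ FK V) (out_reg (i * d + j)) =
  linear_masked_sum M FQ FK (fun l => V l j) i / linear_masked_sum M FQ FK (fun=> 1) i.
Proof.
have acc_ext (j' : nat) : (j' <= d)%N ->
    run M (loop column_pass d.+1) (encode FQ FK V) (acc_reg i j') =
    \sum_(k < m) pass_term (encode FQ FK V) k j' i.
  by move=> j'd; rewrite run_columns // encode_work ?add0r // /acc_reg /tmp_reg; lia.
rewrite run_cat run_normalize ?flat_index_lt //.
rewrite flat_index_div // flat_index_mod // !acc_ext //; last exact: ltnW.
congr (_ / _); apply: eq_bigr => k _; rewrite /pass_term encode_fq; congr (_ * _);
  apply: eq_bigr => l _; rewrite /load_val encode_fk.
- by rewrite ltn_ord encode_v.
- by rewrite ltnn encode_work ?addr0 ?mulr1.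
Qed.

End Program.
End Layout.

Theorem lemma3p1 (R : realType) :
  exists C : nat,
  forall (L dQK m d : nat) (T : nat -> nat),
    (0 < m)%N -> (0 < d)%N ->
    exists (P : seq (instr R)) (out : 'I_L -> 'I_d -> nat),
      (prog_cost L T P <= C * ((T L + L) * m * d))%N /\
      forall (M : 'M[R]_L) (phi : 'rV[R]_dQK -> 'rV[R]_m)
             (Q Kk : 'M[R]_(L, dQK)) (V : 'M[R]_(L, d)) (i : 'I_L) (j : 'I_d),
        run M P (encode (feat phi Q) (feat phi Kk) V) (out i j)
        = kernel_att M phi Q Kk V i j.
Proof.
exists 7%N => L dQK m d T m_gt0 d_gt0.
exists (att_prog L m d R), (fun i j => out_reg L m d (i * d + j)); split.
  by rewrite att_prog_cost; move: (T L) => t; nia.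
move=> M phi Q Kk V i j.
rewrite run_att_prog !linear_masked_sum_feat kernel_attE.
by under [X in _ / X]eq_bigr do rewrite mulr1.
Qed.
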